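(* Let $t\ge 2$. If $G$ is a stitched 2-ichromatic ordered graph whose parts have sizes $m$ and $n$, then $R_t(G)\ge 2tr+1$, where $r=\min(m,n)-1$.
   Context: An ordered graph is a graph together with a specified linear ordering of its vertex set. An ordered graph $G$ is contained in an ordered graph $H$ if there is an order-preserving injection $V(G)\to V(H)$ mapping edges to edges. An interval coloring of an ordered graph is a partition of its vertex set into independent sets each consisting of consecutive vertices (called parts); an ordered graph is 2-ichromatic if its minimum number of parts in an interval coloring is 2. A 2-ichromatic ordered graph is stitched if the four vertices consisting of the first and last vertex of each of the two parts lie in a single connected component (then the interval 2-coloring is unique). $R_t(G)$ is the minimum $N$ such that every coloring of the edges of the ordered complete graph on $N$ vertices with $t$ colors contains a monochromatic copy of $G$. *)

From mathcomp Require Import all_boot.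
Set Implicit Arguments. Unset Strict Implicit. Unset Printing Implicit Defensive.

Definition ordered_graph (k : nat) (e : rel 'I_k) : Prop :=
  symmetric e /\ irreflexive e.

Definition indep_interval (k : nat) (e : rel 'I_k) (lo hi : nat) : Prop :=
  forall x y : 'I_k, lo <= x < hi -> lo <= y < hi -> ~~ e x y.

Definition interval_coloring (k : nat) (e : rel 'I_k) (p : nat) : Prop :=
  exists s : seq nat,
    [/\ size s = p.+1, nth 0 s 0 = 0, nth 0 s p = k, sorted ltn s &
        forall i, i < p -> indep_interval e (nth 0 s i) (nth 0 s i.+1)].

Definition two_ichromatic (k : nat) (e : rel 'I_k) : Prop :=
  interval_coloring e 2 /\ forall p, p < 2 -> ~ interval_coloring e p.

Definition two_split (k : nat) (e : rel 'I_k) (a : nat) : Prop :=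
  [/\ 0 < a, a < k, indep_interval e 0 a & indep_interval e a k].

(* Stitched w.r.t. the 2-coloring split at a: the first and last vertices of
   both parts (0, a-1, a, k-1) lie in a single connected component. *)
Definition stitched_at (k : nat) (e : rel 'I_k) (a : nat) : Prop :=
  forall u v : 'I_k,
    val u \in [:: 0; a.-1; a; k.-1] -> val v \in [:: 0; a.-1; a; k.-1] ->
    connect e u v.

(* A t-coloring of the edges of the ordered complete graph on N vertices:
   the edge {x,y} with x < y gets color c x y. c contains a monochromatic copy
   of G = ('I_k, e) if there is an order-preserving injection f (strictly
   increasing) and a color i with every edge mapped to an edge of color i. *)
Definition mono_copy (t N k : nat) (e : rel 'I_k) (c : 'I_N -> 'I_N -> 'I_t) : Prop :=
  exists (f : 'I_k -> 'I_N) (i : 'I_t),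
    (forall x y : 'I_k, x < y -> f x < f y) /\
    (forall x y : 'I_k, x < y -> e x y -> c (f x) (f y) = i).

(* N has the Ramsey property: every t-coloring of K_N has a monochromatic G.
   R_t(G) is the least such N. *)
Definition ramsey_prop (t N k : nat) (e : rel 'I_k) : Prop :=
  forall c : 'I_N -> 'I_N -> 'I_t, mono_copy e c.

From mathcomp Require Import all_boot.
From mathcomp Require Import zify.

Set Implicit Arguments. Unset Strict Implicit. Unset Printing Implicit Defensive.

(* Suppose N <= 2tr. Cut the vertices 0, ..., N - 1 into at most 2t blocks
   of r consecutive vertices and colour an edge by the sum of the block
   indices of its ends, mod t. In a monochromatic copy of G the block indices
   of adjacent vertices sum to a constant mod t, so along any path the block
   index mod t is preserved on one side of the bipartition. By stitchedness
   the first and last vertices of each part are joined by a path, and each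
   part spans at least r + 1 vertices, so its first and last vertices lie in
   different blocks with congruent indices: the last block index exceeds the
   first by at least t. Doing this for both parts needs block index 2t,
   which does not exist. *)

Lemma eqmod_gap (t m n : nat) : n < m -> m = n %[mod t] -> n + t <= m.
Proof.
move=> lt_nm /eqP; rewrite eqn_mod_dvd; last exact: ltnW.
by move=> /dvdn_leq; rewrite subn_gt0 lt_nm => /(_ isT); lia.
Qed.

Lemma ltn_div_gap (r x y : nat) : 0 < r -> x + r <= y -> x %/ r < y %/ r.
Proof.
move=> r_gt0 le_xr_y; apply: (@leq_trans ((x + r) %/ r)); last exact: leq_div2r.
by rewrite divnDr ?dvdnn // divnn r_gt0 addn1.
Qed.

Lemma incr_ord_gap (k : nat) (g : 'I_k -> nat) :
  (forall x y : 'I_k, x < y -> g x < g y) ->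
  forall x y : 'I_k, x <= y -> g x + (y - x) <= g y.
Proof.
move=> g_incr; suff gap n (x y : 'I_k) : (y : nat) = x + n -> g x + n <= g y.
  by move=> x y le_xy; apply: gap; rewrite subnKC.
elim: n y => [|n IHn] y y_eq.
  by rewrite addn0 in y_eq; rewrite (val_inj y_eq) addn0.
have lt_xn_k : x + n < k by have := ltn_ord y; lia.
have := IHn (Ordinal lt_xn_k) erefl.
have : g (Ordinal lt_xn_k) < g y by apply: g_incr => /=; lia.
lia.
Qed.

Section EdgeSumInvariant.

Variables (T : finType) (e : rel T) (side : pred T) (w : T -> nat) (t i : nat).
Hypothesis e_flips_side : forall u v, e u v -> side v = ~~ side u.
Hypothesis e_sum_mod : forall u v, e u v -> (w u + w v) %% t = i.

Lemma connect_sum_mod z v : connect e z v ->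
  if side v == side z then w v = w z %[mod t] else (w v + w z) %% t = i.
Proof.
pose inv x := if side x == side z then w x = w z %[mod t] else (w x + w z) %% t = i.
case/connectP=> p + ->; rewrite -/(inv _).
have : inv z by rewrite /inv eqxx.
elim: p {1 2 3}z => [|y p IHp] x inv_x //= /andP[e_xy p_path]; apply: IHp p_path.
rewrite /inv (e_flips_side e_xy); have sum_xy := e_sum_mod e_xy.
move: inv_x; rewrite /inv; case: (side x =P side z) => [<-|/eqP].
  by case: (side x) => /= inv_x; rewrite -modnDmr -inv_x modnDmr addnC.
case: (side x) (side z) => [] [] //= _ inv_x;
  by apply/eqP; rewrite -(eqn_modDl (w x)) sum_xy inv_x.
Qed.

Lemma connect_same_side_eqmod u v :
  connect e u v -> side u = side v -> w u = w v %[mod t].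
Proof. by move=> /connect_sum_mod + side_uv; rewrite side_uv eqxx => /esym. Qed.

End EdgeSumInvariant.

Lemma two_split_edge_cross (k : nat) (e : rel 'I_k) (a : nat) :
  indep_interval e 0 a -> indep_interval e a k ->
  forall u v : 'I_k, e u v -> (v < a) = ~~ (u < a).
Proof.
move=> indA indB u v e_uv.
case: (ltnP u a) => u_a; case: (ltnP v a) => v_a //.
- by case/negP: (indA u v u_a v_a).
- by move: (indB u v); rewrite u_a v_a !ltn_ord e_uv => /(_ isT isT).
Qed.

Definition block_sum_coloring (r N t : nat) (t_gt0 : 0 < t) (x y : 'I_N) : 'I_t :=
  Ordinal (ltn_pmod (x %/ r + y %/ r) t_gt0).
Arguments block_sum_coloring r N {t} t_gt0 x y.

Lemma mono_copy_block_sum_coloring (k t r N : nat) (t_gt0 : 0 < t) (e : rel 'I_k) :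
  symmetric e -> irreflexive e -> mono_copy e (block_sum_coloring r N t_gt0) ->
  exists (f : 'I_k -> 'I_N) (i : nat), (forall x y : 'I_k, x < y -> f x < f y) /\
    forall u v : 'I_k, e u v -> (f u %/ r + f v %/ r) %% t = i.
Proof.
move=> e_sym e_irr [f [i [f_incr f_mono]]]; exists f, i; split=> // u v e_uv.
case: (ltngtP u v) => [lt_uv|lt_vu|/val_inj eq_uv].
- by move: (f_mono u v lt_uv e_uv) => /(congr1 val).
- rewrite e_sym in e_uv; rewrite addnC.
  by move: (f_mono v u lt_vu e_uv) => /(congr1 val).
- by rewrite eq_uv e_irr in e_uv.
Qed.

Section MonochromaticBlocks.

Variables (k N t r a i : nat) (e : rel 'I_k) (f : 'I_k -> 'I_N).
Hypothesis f_incr : forall x y : 'I_k, x < y -> f x < f y.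
Hypothesis block_sum_mod : forall u v : 'I_k, e u v -> (f u %/ r + f v %/ r) %% t = i.
Hypotheses (r_gt0 : 0 < r) (indA : indep_interval e 0 a) (indB : indep_interval e a k).

Lemma same_part_block_gap (u v : 'I_k) :
  connect e u v -> (u < a) = (v < a) -> u + r <= v -> f u %/ r + t <= f v %/ r.
Proof.
move=> conn_uv same_part le_urv; apply: eqmod_gap.
  apply: ltn_div_gap r_gt0 _.
  have := @incr_ord_gap k (fun x => f x) f_incr u v; lia.
apply/esym/(@connect_same_side_eqmod _ e (fun x => x < a) (fun x => f x %/ r) t i)
  => //; exact: two_split_edge_cross.
Qed.

Lemma stitched_last_block (lt_k1_k : k.-1 < k) :
  r < a -> r < k - a -> stitched_at e a -> 2 * t <= f (Ordinal lt_k1_k) %/ r.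
Proof.
move=> r_lt_a r_lt_ka stitched.
have a_gt0 : 0 < a by lia.
have a_lt_k : a < k by lia.
have lt_0_k : 0 < k by lia.
have lt_a1_k : a.-1 < k by lia.
have gapA : f (Ordinal lt_0_k) %/ r + t <= f (Ordinal lt_a1_k) %/ r.
  apply: same_part_block_gap; first by apply: stitched; rewrite !inE eqxx ?orbT.
    by rewrite /= a_gt0 ltn_predL.
  by rewrite /=; lia.
have gapB : f (Ordinal a_lt_k) %/ r + t <= f (Ordinal lt_k1_k) %/ r.
  apply: same_part_block_gap; first by apply: stitched; rewrite !inE eqxx ?orbT.
    by rewrite /= ltnn; apply/esym/negbTE; rewrite -leqNgt; lia.
  by rewrite /=; lia.
have A_B : f (Ordinal lt_a1_k) %/ r <= f (Ordinal a_lt_k) %/ r.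
  by apply/leq_div2r/ltnW/f_incr => /=; lia.
rewrite mul2n -addnn; apply: leq_trans gapB; rewrite leq_add2r.
by apply: leq_trans A_B; apply: leq_trans gapA; apply: leq_addl.
Qed.

End MonochromaticBlocks.

Lemma ramsey_prop_gt0 (t N k : nat) (e : rel 'I_k) :
  0 < t -> 0 < k -> ramsey_prop t N e -> 0 < N.
Proof.
move=> t_gt0 k_gt0 /(_ (fun _ _ => Ordinal t_gt0)) [f _].
by case: N f => // f; case: (f (Ordinal k_gt0)).
Qed.

Theorem corollary5p1 (t k : nat) (e : rel 'I_k) (a : nat) :
  2 <= t ->
  ordered_graph e ->
  two_ichromatic e ->
  two_split e a ->
  stitched_at e a ->
  forall N : nat, ramsey_prop t N e ->
    2 * t * (minn a (k - a) - 1) + 1 <= N.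
Proof.
move=> t_ge2 [e_sym e_irr] _ [a_gt0 a_lt_k indA indB] stitched N ramsey.
set r := minn a (k - a) - 1.
have t_gt0 : 0 < t by lia.
have lt_0_k : 0 < k by lia.
have [->|r_gt0] := posnP r.
  by rewrite muln0; exact: ramsey_prop_gt0 t_gt0 lt_0_k ramsey.
rewrite addn1 ltnNge; apply/negP => N_small.
have [f [i [f_incr block_sum_mod]]] := mono_copy_block_sum_coloring e_sym e_irr
  (ramsey (block_sum_coloring r N t_gt0)).
have lt_k1_k : k.-1 < k by lia.
have r_lt_a : r < a by rewrite /r; lia.
have r_lt_ka : r < k - a by rewrite /r; lia.
have := stitched_last_block f_incr block_sum_mod r_gt0 indA indB lt_k1_k
  r_lt_a r_lt_ka stitched.
rewrite leq_divRL // => last_block.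
by have := ltn_ord (f (Ordinal lt_k1_k)); lia.
Qed.
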